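(* Let $S=S'\wedge C$ be a scheduling problem on $n$ elements where $C$ is a contractible clause, let $V(C)=O_1\uplus\cdots\uplus O_k$ be the decomposition into $\sim_C$ equivalence classes ordered so that $O_i>O_j$ for $i<j$, and let $r_i=|O_i|-1$. Then $$\mathcal{S}_{S'\wedge\neg C}=\left(\mathcal{S}_{S'\downarrow_{(r_1,\dots,r_k)}}\right)\uparrow^{(r_1,\dots,r_k)}.$$
   Context: A scheduling problem on $n$ elements is a Boolean formula over atoms $(x_i\le x_j)$, $i,j\in[n]$, with $(x_i=x_j)=(x_i\le x_j)\wedge(x_j\le x_i)$ and $(x_i\ne x_j)=\neg(x_i=x_j)$. A solution is $f:[n]\to\mathbb{P}=\{1,2,\dots\}$ making it true with $x_i=f(i)$; $\mathcal{S}_S=\sum_f y_{f(1)}\cdots y_{f(n)}$ over solutions, in noncommuting variables $y_1,y_2,\dots$. A formula $C$ given as $C=\bigvee_{(i,j)\in I}(x_i\ne x_j)$ with $I\subseteq[n]\times[n]$ is edge-like; $V(C)$ is the set of indices $i$ with $x_i$ appearing in $C$, and $\sim_C$ is the equivalence relation on $V(C)$ generated by $i\sim j$ for $(i,j)\in I$. For disjoint sets, $A>B$ means $a>b$ for all $a\in A,b\in B$. $C$ is a contractible clause if it is edge-like, $V(C)=\{m,m+1,\dots,n\}$ for some $1\le m\le n$, and the $\sim_C$ classes can be ordered $O_1,\dots,O_k$ with $O_i>O_j$ for $i<j$. With $r=\sum_i r_i$, the contraction $S'\downarrow_{(r_1,\dots,r_k)}$ is the scheduling problem on $n-r$ elements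 obtained from $S'$ by replacing each variable $x_j$ by $x_{\psi(j)}$, where $\psi(j)=j$ for $j<m$ and $\psi(j)=m+k-i$ for $j\in O_i$ (i.e. each class is identified to one variable and indices are standardized to $[n-r]$ preserving order). Induction: for nonnegative integers $r_1,\dots,r_k$ and a monomial $y_{i_1}\cdots y_{i_p}$ with $k\le p$, $y_{i_1}\cdots y_{i_p}\uparrow^{(r_1,\dots,r_k)}=y_{i_1}\cdots y_{i_{p-k}}y_{i_{p-k+1}}^{1+r_k}\cdots y_{i_p}^{1+r_1}$, extended linearly (termwise). *)

From mathcomp Require Import all_boot.
Set Implicit Arguments. Unset Strict Implicit. Unset Printing Implicit Defensive.

(* Boolean formulas over atoms (x_i <= x_j); indices are 1-based. *)
Inductive formula : Type :=
| FTrue | FFalse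
| Atom of nat & nat
| FNot of formula
| FAnd of formula & formula
| FOr of formula & formula.

Fixpoint eval (F : formula) (x : nat -> nat) : bool :=
  match F with
  | FTrue => true | FFalse => false
  | Atom i j => x i <= x j
  | FNot G => ~~ eval G x
  | FAnd G H => eval G x && eval H x
  | FOr G H => eval G x || eval H x
  end.

Fixpoint wf (n : nat) (F : formula) : bool :=
  match F with
  | FTrue | FFalse => true
  | Atom i j => (0 < i <= n) && (0 < j <= n)
  | FNot G => wf n G
  | FAnd G H | FOr G H => wf n G && wf n H
  end.

Fixpoint subst (psi : nat -> nat) (F : formula) : formula :=
  match F with
  | FTrue => FTrue | FFalse => FFalse
  | Atom i j => Atom (psi i) (psi j)
  | FNot G => FNot (subst psi G)
  | FAnd G H => FAnd (subst psi G) (subst psi H)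
  | FOr G H => FOr (subst psi G) (subst psi H)
  end.

Definition FEq i j := FAnd (Atom i j) (Atom j i).
Definition FNeq i j := FNot (FEq i j).

Fixpoint clause (I : seq (nat * nat)) : formula :=
  match I with
  | [::] => FFalse
  | (i, j) :: I' => FOr (FNeq i j) (clause I')
  end.

Definition VC (I : seq (nat * nat)) : seq nat := flatten [seq [:: p.1; p.2] | p <- I].

Inductive simC (I : seq (nat * nat)) : nat -> nat -> Prop :=
| simC_refl i : i \in VC I -> simC I i i
| simC_edge i j : (i, j) \in I -> simC I i j
| simC_sym i j : simC I i j -> simC I j i
| simC_trans i j l : simC I i j -> simC I j l -> simC I i l.

(* Noncommutative series in y_1, y_2, ...: coefficient of each word
   (a word y_{a_1}...y_{a_p} is the sequence [:: a_1; ...; a_p]). *)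
Definition series := seq nat -> nat.

(* S_F for a scheduling problem F on n elements: solutions f : [n] -> P,
   monomial y_{f(1)} ... y_{f(n)}. *)
Definition sched_series (n : nat) (F : formula) : series :=
  fun w => ((size w == n) && all (fun a => 0 < a) w
            && eval F (fun i => nth 0 w i.-1) : nat).

Definition psi (m : nat) (O : seq (seq nat)) (j : nat) : nat :=
  if j < m then j else m + size O - 1 - find (fun o => j \in o) O.

Definition contraction (m : nat) (O : seq (seq nat)) (F : formula) : formula :=
  subst (psi m O) F.

Definition up (r : seq nat) (u : seq nat) : seq nat :=
  take (size u - size r) u ++
  flatten [seq nseq e.+1 a | '(a, e) <- zip (drop (size u - size r) u) (rev r)].

Fixpoint words_over (A : seq nat) (l : nat) : seq (seq nat) :=
  match l with
  | 0 => [:: [::]]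
  | l'.+1 => [seq a :: u | a <- A, u <- words_over A l']
  end.

(* termwise (linear) extension of induction to series: the coefficient of w
   is the sum of the coefficients of all monomials u (of length >= k) with
   up r u = w; such u have length size w - sumn r and letters among those
   of w, so the enumeration below covers all of them (each exactly once). *)
Definition induce (r : seq nat) (F : series) : series :=
  fun w => \sum_(u <- words_over (undup w) (size w - sumn r))
             (if (size r <= size u) && (up r u == w) then F u else 0).

(* Let psi be the contraction map: it fixes 1, ..., m-1 and sends the class
   O_i to the single index m+k-i.  For a word u of length n-r, the word u o psi
   has length n and is constant on every ~_C class, so it violates C.
   Conversely a word w violating C is constant on classes, hence
   w = (w o psi') o psi for any right inverse psi' of psi; and u o psi determines
   u since psi is onto.  So u |-> u o psi is a bijection from the solutions of
   S' contracted onto the solutions of S' /\ ~C.  Finally the classes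
   O_k < ... < O_1 tile [m, n] in increasing order, so u o psi is u with its
   last k letters repeated |O_k|, ..., |O_1| times, i.e. the induction of u. *)

From mathcomp Require Import all_boot zify.
Set Implicit Arguments. Unset Strict Implicit. Unset Printing Implicit Defensive.

Lemma eval_subst f F x : eval (subst f F) x = eval F (fun i => x (f i)).
Proof. by elim: F => //= [G -> | G -> H -> | G -> H ->]. Qed.

Lemma eq_eval_wf n F x y :
  wf n F -> (forall i, 0 < i <= n -> x i = y i) -> eval F x = eval F y.
Proof.
move=> + xy; elim: F => //= [i j /andP[iP jP] | G IH /IH -> |
  G IG H IH /andP[/IG -> /IH ->] | G IG H IH /andP[/IG -> /IH ->]] //.
by rewrite !xy.
Qed.

Lemma evalN_clause I x :
  ~~ eval (clause I) x = all (fun p => x p.1 == x p.2) I.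
Proof. by elim: I => //= [[i j] I IH]; rewrite negb_or IH negbK eqn_leq. Qed.

Lemma edge_mem_VC I i j : (i, j) \in I -> (i \in VC I) && (j \in VC I).
Proof.
elim: I => //= p I IH; rewrite !in_cons => /orP[/eqP <- | /IH/andP[-> ->]].
  by rewrite !eqxx orbT.
by rewrite !orbT.
Qed.

Lemma simC_VC I a b : simC I a b -> (a \in VC I) && (b \in VC I).
Proof.
elim=> [i -> | i j /edge_mem_VC | i j _ /andP[-> ->] |] //.
by move=> i j l _ /andP[-> _] _ /andP[_ ->].
Qed.

Lemma simC_eq I (x : nat -> nat) a b :
  (forall p, p \in I -> x p.1 = x p.2) -> simC I a b -> x a = x b.
Proof. by move=> xI; elim=> [// | i j /xI | i j _ -> | i j l _ -> _ ->]. Qed.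

Lemma mem_words_over A l u :
  (u \in words_over A l) = (size u == l) && all (mem A) u.
Proof.
elim: l u => [|l IH] [|a u] /=; rewrite ?mem_seq1 //.
  by apply/negbTE/allpairsP => -[p [_ _ //]].
apply/allpairsP/idP => [[[b v] /= [Hb Hv [-> ->]]] | /andP[su /andP[Ha Hu]]].
  by move: Hv; rewrite IH Hb => ->.
by exists (a, u); split=> //; rewrite IH -eqSS su Hu.
Qed.

Lemma uniq_words_over A l : uniq A -> uniq (words_over A l).
Proof.
move=> UA; elim: l => [|l IH] //=.
by apply: allpairs_uniq => // -[a u] [b v] _ _ [-> ->].
Qed.

Lemma sorted_flatten (T : Type) (leT : rel T) (ss : seq (seq T)) :
  transitive leT -> all (sorted leT) ss -> pairwise (allrel leT) ss ->
  sorted leT (flatten ss).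
Proof.
move=> leT_tr; rewrite (sorted_pairwise leT_tr).
elim: ss => //= s ss IH /andP[ps /IH{}IH] /andP[sss /IH{}IH].
rewrite pairwise_cat -(sorted_pairwise leT_tr) ps IH !andbT.
elim: ss sss {IH} => [|t ss IHt] /=; first by rewrite allrel0r.
by case/andP=> st /IHt; rewrite allrel_catr st.
Qed.

Lemma big_indicator_uniq (T : eqType) (s : seq T) x (b : bool) :
  uniq s -> (b -> x \in s) -> \sum_(u <- s) ((u == x) && b : nat) = b.
Proof.
move=> us; case: b => [/(_ isT) xs | _]; last by rewrite big1 // => u; rewrite andbF.
rewrite -[in RHS]xs -count_uniq_mem // -sum1_count [RHS]big_mkcond.
by apply: eq_bigr => u _; rewrite andbT.
Qed.

Definition letter (w : seq nat) (i : nat) : nat := nth 0 w i.-1.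

Definition solution (n : nat) (F : formula) (w : seq nat) : bool :=
  [&& size w == n, all (fun a => 0 < a) w & eval F (letter w)].

Lemma sched_seriesE n F w : sched_series n F w = solution n F w.
Proof. by rewrite /sched_series /solution andbA. Qed.

Lemma letter_map_iota (f : nat -> nat) len j :
  0 < j <= len -> letter [seq f i | i <- iota 1 len] j = f j.
Proof.
by case: j => // j /andP[_ lt_j]; rewrite /letter (nth_map 0) ?size_iota // nth_iota.
Qed.

Lemma eq_from_letter u v :
  size u = size v -> (forall j, 0 < j <= size u -> letter u j = letter v j) ->
  u = v.
Proof.
by move=> suv E; apply: (eq_from_nth (x0 := 0) suv) => i lt_i; apply: (E i.+1).
Qed.

Lemma up_split r u p : size u = p + size r ->
  up r u = take p u ++
    flatten (mkseq (fun t => nseq (nth 0 (rev r) t).+1 (nth 0 u (p + t))) (size r)).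
Proof.
move=> su; rewrite /up su addnK; congr (_ ++ flatten _).
have sz : size (zip (drop p u) (rev r)) = size r.
  by rewrite size_zip size_drop size_rev su addKn minnn.
apply: (@eq_from_nth _ [::]) => [|t]; rewrite size_map sz ?size_mkseq // => lt_t.
rewrite (nth_map (0, 0)) ?sz // nth_zip ?size_drop ?size_rev ?su ?addKn //.
by rewrite nth_drop nth_mkseq.
Qed.

Lemma sumn_map_predn (T : Type) (f : T -> nat) (s : seq T) :
  all (fun x => 0 < f x) s -> sumn [seq (f x).-1 | x <- s] + size s = sumn (map f s).
Proof. by elim: s => //= x s IH /andP[fx /IH <-]; lia. Qed.

Record contractible (n m : nat) (I : seq (nat * nat)) (O : seq (seq nat)) :
  Prop := Contractible {
  contractible_m_gt0 : 0 < m;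
  contractible_m_le_n : m <= n;
  mem_VC_contractible : forall x, x \in VC I <-> m <= x <= n;
  contractible_class : forall i, i < size O -> uniq (nth [::] O i) /\
    exists a, a \in VC I /\ forall x, x \in nth [::] O i <-> simC I a x;
  contractible_cover : forall x, x \in VC I ->
    exists2 i, i < size O & x \in nth [::] O i;
  contractible_order : forall i j, i < j < size O ->
    forall a b, a \in nth [::] O i -> b \in nth [::] O j -> b < a }.

Section Contraction.

Variables (n m : nat) (I : seq (nat * nat)) (O : seq (seq nat)).
Hypothesis HC : contractible n m I O.

Local Notation k := (size O).
Local Notation cls i := (nth [::] O i).
Local Notation n' := (m.-1 + k).
Local Notation r := [seq (size o).-1 | o <- O].

Lemma class_range i x : i < k -> x \in cls i -> m <= x <= n.
Proof.
move=> lt_ik x_i; have [_ [a [_ Ha]]] := contractible_class HC lt_ik.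
by apply/(mem_VC_contractible HC); case/andP: (simC_VC (proj1 (Ha x) x_i)).
Qed.

Lemma class_of x : m <= x <= n -> exists2 i, i < k & x \in cls i.
Proof. by move/(mem_VC_contractible HC)/(contractible_cover HC). Qed.

Lemma same_class_simC i a b : i < k -> a \in cls i -> b \in cls i -> simC I a b.
Proof.
move=> lt_ik a_i b_i; have [_ [c [_ Hc]]] := contractible_class HC lt_ik.
exact: simC_trans (simC_sym (proj1 (Hc a) a_i)) (proj1 (Hc b) b_i).
Qed.

Lemma simC_class i a b : i < k -> a \in cls i -> simC I a b -> b \in cls i.
Proof.
move=> lt_ik a_i ab; have [_ [c [_ Hc]]] := contractible_class HC lt_ik.
by apply/Hc; apply: simC_trans (proj1 (Hc a) a_i) ab.
Qed.

Lemma head_class i : i < k -> head 0 (cls i) \in cls i.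
Proof.
move=> lt_ik; have [_ [c [c_VC Hc]]] := contractible_class HC lt_ik.
have : c \in cls i by apply/Hc; exact: simC_refl.
by case: (cls i) => //= a s _; rewrite mem_head.
Qed.

Lemma find_class i x : i < k -> x \in cls i -> find (fun o => x \in o) O = i.
Proof.
move=> lt_ik x_i; set j := find _ O.
have has_x : has (fun o => x \in o) O by apply/(has_nthP [::]); exists i.
have lt_jk : j < k by rewrite -has_find.
have x_j : x \in cls j := nth_find [::] has_x.
case: (ltngtP j i) => // [lt_ji | lt_ij].
  by have := contractible_order HC (introT andP (conj lt_ji lt_ik)) x_j x_i; rewrite ltnn.
by have := contractible_order HC (introT andP (conj lt_ij lt_jk)) x_i x_j; rewrite ltnn.
Qed.

Lemma psi_low j : j < m -> psi m O j = j.
Proof. by rewrite /psi => ->. Qed.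

Lemma psi_class i x : i < k -> x \in cls i -> psi m O x = m + k - 1 - i.
Proof.
move=> lt_ik x_i; have /andP[le_mx _] := class_range lt_ik x_i.
by rewrite /psi ltnNge le_mx /= (find_class lt_ik x_i).
Qed.

Lemma psi_range j : 0 < j <= n -> 0 < psi m O j <= n'.
Proof.
move=> j_n; case: (ltnP j m) => [lt_jm | le_mj]; first by rewrite psi_low; lia.
have [i lt_ik j_i] := @class_of j ltac:(lia).
by rewrite (psi_class lt_ik j_i); have := contractible_m_gt0 HC; lia.
Qed.

Lemma psi_edge a b : (a, b) \in I -> psi m O a = psi m O b.
Proof.
move=> ab; have /andP[a_VC _] := edge_mem_VC ab.
have [i lt_ik a_i] := contractible_cover HC a_VC.
by rewrite (psi_class lt_ik a_i) (psi_class lt_ik (simC_class lt_ik a_i (simC_edge ab))).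
Qed.

Definition psi_inv (p : nat) : nat :=
  if p < m then p else head 0 (cls (m + k - 1 - p)).

Lemma psi_inv_range p : 0 < p <= n' -> 0 < psi_inv p <= n.
Proof.
rewrite /psi_inv => p_n'; case: (ltnP p m) => [lt_pm | le_mp].
  by have := contractible_m_le_n HC; lia.
have lt_ik : m + k - 1 - p < k by lia.
have := contractible_m_gt0 HC.
by have := class_range lt_ik (head_class lt_ik); lia.
Qed.

Lemma psi_invK p : 0 < p <= n' -> psi m O (psi_inv p) = p.
Proof.
rewrite /psi_inv => p_n'; case: (ltnP p m) => [lt_pm | le_mp]; first exact: psi_low.
have lt_ik : m + k - 1 - p < k by lia.
have := contractible_m_gt0 HC.
by rewrite (psi_class lt_ik (head_class lt_ik)); lia.
Qed.

Lemma psi_inv_psi (x : nat -> nat) j : (forall p, p \in I -> x p.1 = x p.2) ->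
  0 < j <= n -> x (psi_inv (psi m O j)) = x j.
Proof.
move=> xI j_n; case: (ltnP j m) => [lt_jm | le_mj].
  by rewrite psi_low // /psi_inv lt_jm.
have [i lt_ik j_i] := @class_of j ltac:(lia).
rewrite (psi_class lt_ik j_i) /psi_inv ltnNge (_ : m <= _) /=; last by lia.
rewrite (_ : m + k - 1 - _ = i); last by lia.
exact: simC_eq xI (same_class_simC lt_ik (head_class lt_ik) j_i).
Qed.

Definition expand (u : seq nat) : seq nat :=
  [seq letter u (psi m O j) | j <- iota 1 n].

Definition contract (w : seq nat) : seq nat :=
  [seq letter w (psi_inv p) | p <- iota 1 n'].

Lemma size_expand u : size (expand u) = n.
Proof. by rewrite size_map size_iota. Qed.

Lemma size_contract w : size (contract w) = n'.
Proof. by rewrite size_map size_iota. Qed.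

Lemma expand_sub u : size u = n' -> {subset expand u <= u}.
Proof.
move=> su x /mapP[j]; rewrite mem_iota => j_n ->.
by apply: mem_nth; rewrite su; have := psi_range j_n; lia.
Qed.

Lemma contract_sub w : size w = n -> {subset contract w <= w}.
Proof.
move=> sw x /mapP[p]; rewrite mem_iota => p_n' ->.
by apply: mem_nth; rewrite sw; have := psi_inv_range p_n'; lia.
Qed.

Lemma expandK u : size u = n' -> contract (expand u) = u.
Proof.
move=> su; apply: eq_from_letter => [|p]; rewrite size_contract ?su // => p_n'.
by rewrite letter_map_iota // letter_map_iota ?psi_invK ?psi_inv_range.
Qed.

Lemma contractK w : size w = n -> (forall p, p \in I -> letter w p.1 = letter w p.2) ->
  expand (contract w) = w.
Proof.
move=> sw wI; apply: eq_from_letter => [|j]; rewrite size_expand ?sw // => j_n.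
by rewrite letter_map_iota // letter_map_iota ?psi_range // psi_inv_psi.
Qed.

Lemma eval_contraction S' u :
  wf n S' -> eval (contraction m O S') (letter u) = eval S' (letter (expand u)).
Proof.
move=> wfS; rewrite /contraction eval_subst; apply: (eq_eval_wf wfS) => j j_n.
by rewrite letter_map_iota.
Qed.

Lemma expandN_clause u : ~~ eval (clause I) (letter (expand u)).
Proof.
rewrite evalN_clause; apply/allP => -[a b] ab /=.
have /andP[/(mem_VC_contractible HC) a_n /(mem_VC_contractible HC) b_n] := edge_mem_VC ab.
have m_gt0 := contractible_m_gt0 HC.
by rewrite !letter_map_iota ?(psi_edge ab) //; lia.
Qed.

Lemma solution_expand S' u : wf n S' -> size u = n' ->
  solution n (FAnd S' (FNot (clause I))) (expand u) =
  solution n' (contraction m O S') u.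
Proof.
move=> wfS su; rewrite /solution /= size_expand su !eqxx expandN_clause andbT.
rewrite eval_contraction //=; congr (_ && _); apply/allP/allP => pos x x_u.
  by apply/pos/(contract_sub (size_expand u)); rewrite expandK.
exact/pos/(expand_sub su).
Qed.

Definition blocks : seq (seq nat) := [seq sort leq o | o <- rev O].

Lemma size_blocks : size blocks = k.
Proof. by rewrite size_map size_rev. Qed.

Lemma nth_blocks t : t < k -> nth [::] blocks t = sort leq (cls (k - t.+1)).
Proof. by move=> lt_tk; rewrite (nth_map [::]) ?size_rev // nth_rev. Qed.

Lemma flatten_blocks : flatten blocks = iota m (n - m + 1).
Proof.
have le_mn := contractible_m_le_n HC.
apply: (irr_sorted_eq ltn_trans ltnn); last first.
- move=> x; rewrite mem_iota; apply/flattenP/idP => [[s /mapP[o]] | x_n].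
    rewrite mem_rev => /(nthP [::])[i lt_ik <-] ->; rewrite mem_sort => x_i.
    by have := class_range lt_ik x_i; lia.
  have [i lt_ik x_i] := @class_of x ltac:(lia).
  exists (sort leq (cls i)); last by rewrite mem_sort.
  by apply: map_f; rewrite mem_rev mem_nth.
- exact: iota_ltn_sorted.
apply: sorted_flatten ltn_trans _ _.
  apply/allP => s /mapP[o]; rewrite mem_rev => /(nthP [::])[i lt_ik <-] ->.
  rewrite ltn_sorted_uniq_leq sort_uniq (sort_sorted leq_total) andbT.
  by case: (contractible_class HC lt_ik).
apply/(pairwiseP [::]) => t t'; rewrite !inE size_blocks => lt_tk lt_t'k lt_tt'.
rewrite !nth_blocks //; apply/allrelP => a b; rewrite !mem_sort => a_O b_O.
by apply: (contractible_order HC _ b_O a_O); lia.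
Qed.

Lemma contracted_length : n - sumn r = n'.
Proof.
have := congr1 size flatten_blocks; rewrite size_iota size_flatten /shape -map_comp.
rewrite (eq_map (g := size) (fun o => size_sort _ _)) map_rev sumn_rev.
rewrite -sumn_map_predn; last first.
  by apply/(all_nthP [::]) => i lt_ik; have := head_class lt_ik; case: (cls i).
by have := contractible_m_gt0 HC; have := contractible_m_le_n HC; lia.
Qed.

Lemma up_expand u : size u = n' -> up r u = expand u.
Proof.
move=> su; have m_gt0 := contractible_m_gt0 HC.
have iota_split : iota 1 n = iota 1 m.-1 ++ flatten blocks.
  rewrite flatten_blocks -{2}(prednK m_gt0) -add1n -iotaD; congr iota.
  by have := contractible_m_le_n HC; lia.
rewrite (up_split (p := m.-1)) ?size_map ?su // /expand iota_split map_cat.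
congr (_ ++ _).
  have le_m_u : m.-1 <= size u by rewrite su leq_addr.
  apply: eq_from_letter => [|j]; rewrite size_takel // ?size_map ?size_iota // => j_m.
  rewrite letter_map_iota // psi_low; last lia.
  by rewrite /letter nth_take //; lia.
rewrite map_flatten -[blocks](mkseq_nth [::]) size_blocks /mkseq -map_comp.
congr flatten; apply/eq_in_map => t; rewrite mem_iota => /andP[_ lt_tk]; rewrite [RHS]/=.
have lt_ik : k - t.+1 < k by lia.
rewrite nth_blocks // nth_rev ?size_map // (nth_map [::]) ?size_map; last lia.
rewrite prednK; last by have := head_class lt_ik; case: (cls _).
rewrite -(size_sort leq) -(size_map (fun j => letter u (psi m O j))).
apply/esym/all_pred1P/allP => y /mapP[x]; rewrite mem_sort => x_i ->.
by rewrite /= (psi_class lt_ik x_i) /letter; apply/eqP; congr nth; lia.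
Qed.

Lemma induced_preimage S' u w : wf n S' ->
  [&& size r <= size u, up r u == w & solution (n - sumn r) (contraction m O S') u] =
  (u == contract w) && solution n (FAnd S' (FNot (clause I))) w.
Proof.
move=> wfS; rewrite contracted_length.
apply/and3P/andP => [[_ /eqP <- sol_u] | [/eqP -> sol_w]].
  have su : size u = n' by case/and3P: sol_u => /eqP.
  by rewrite up_expand // expandK // solution_expand // eqxx.
case/and3P: (sol_w) => /eqP sw _ /andP[_]; rewrite evalN_clause => /allP wI.
have wK : expand (contract w) = w by apply: contractK => // p /wI /eqP.
split; first by rewrite size_map size_contract leq_addl.
  by rewrite up_expand ?size_contract // wK.
by rewrite -solution_expand ?size_contract // wK.
Qed.

Lemma contract_mem_words w : size w = n ->
  contract w \in words_over (undup w) (size w - sumn r).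
Proof.
move=> sw; rewrite mem_words_over size_contract sw contracted_length eqxx /=.
by apply/allP => x /(contract_sub sw); rewrite -mem_undup.
Qed.

End Contraction.

Theorem lemma3p7 (n m : nat) (S' : formula) (I : seq (nat * nat))
  (O : seq (seq nat)) :
  wf n S' ->
  (* C = clause I is contractible *)
  0 < m <= n ->
  (forall x, x \in VC I <-> m <= x <= n) ->
  (* O = [:: O_1; ...; O_k] lists the ~_C classes *)
  (forall i, i < size O -> uniq (nth [::] O i) /\
     exists a, a \in VC I /\ forall x, x \in nth [::] O i <-> simC I a x) ->
  (forall x, x \in VC I -> exists2 i, i < size O & x \in nth [::] O i) ->
  (forall i j, i < j < size O ->
     forall a b, a \in nth [::] O i -> b \in nth [::] O j -> b < a) ->
  let r := [seq (size o).-1 | o <- O] in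
  forall w,
    sched_series n (FAnd S' (FNot (clause I))) w =
    induce r (sched_series (n - sumn r) (contraction m O S')) w.
Proof.
move=> wfS /andP[m_gt0 m_le_n] HVC HO Hcov Hord r w.
have HC : contractible n m I O by split.
have indicator u : (if (size r <= size u) && (up r u == w)
    then sched_series (n - sumn r) (contraction m O S') u else 0) =
  (u == contract m O w) && solution n (FAnd S' (FNot (clause I))) w.
  by rewrite sched_seriesE -(induced_preimage HC u w wfS) /r andbA; case: (_ && _).
rewrite sched_seriesE /induce (eq_bigr _ (fun u _ => indicator u)).
rewrite big_indicator_uniq ?uniq_words_over ?undup_uniq //.
by rewrite /solution => /and3P[/eqP sw _ _]; exact: (contract_mem_words HC sw).
Qed.
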